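(* Fix a start pose $\mathbf{p}_0=(x_0,y_0,\theta_0)$ and CSC inputs $\mathbf{u}_i=(v_i,\omega_i)$, $i=1,2,3$ ($v_i>0$, $\omega_1\neq0$, $\omega_2=0$, $\omega_3\neq0$). A pose $\mathbf{p}_f=(x_f,y_f,\theta_f)$ is reachable from $\mathbf{p}_0$ by the CSC path with these inputs if and only if $$(x_f-c)^2+(y_f-d)^2\ \ge\ r_{31}^2,$$ where $c=x_0-r_1\sin\theta_0+r_3\sin\theta_f$ and $d=y_0+r_1\cos\theta_0-r_3\cos\theta_f$.
   Context: A pose is $\mathbf{p}=(x,y,\theta)$, heading understood modulo $2\pi$. An input is $\mathbf{u}=(v,\omega)$. The motion primitive $\mathrm{M}_{\mathbf{u},\tau}$ maps $(x,y,\theta)$ to: if $\omega\neq0$, $\big(x-\frac{v}{\omega}(\sin\theta-\sin(\theta+\omega\tau)),\ y+\frac{v}{\omega}(\cos\theta-\cos(\theta+\omega\tau)),\ \theta+\omega\tau\big)$; if $\omega=0$, $(x+v\tau\cos\theta,\ y+v\tau\sin\theta,\ \theta)$. For a fixed path type with fixed inputs $\mathbf{u}_1,\mathbf{u}_2,\mathbf{u}_3$, a pose $\mathbf{p}_f$ is reachable from $\mathbf{p}_0$ if there exist durations $\tau_1,\tau_2,\tau_3\ge0$, with $|\omega_i\tau_i|<2\pi$ for each turning segment, such that $\mathrm{M}_{\mathbf{u}_3,\tau_3}(\mathrm{M}_{\mathbf{u}_2,\tau_2}(\mathrm{M}_{\mathbf{u}_1,\tau_1}(\mathbf{p}_0)))$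 has position $(x_f,y_f)$ and heading congruent to $\theta_f$ modulo $2\pi$. Notation: $r_i=v_i/\omega_i$ for turning segments, $r_{31}=r_3-r_1$. *)

From Stdlib Require Import Reals Lra.
Open Scope R_scope.

Definition pose : Type := (R * R * R)%type.

Definition motion (v w tau : R) (p : pose) : pose :=
  let '(x, y, th) := p in
  if Req_EM_T w 0 then
    (x + v * tau * cos th, y + v * tau * sin th, th)
  else
    (x - v / w * (sin th - sin (th + w * tau)),
     y + v / w * (cos th - cos (th + w * tau)),
     th + w * tau).

Definition admissible (w tau : R) : Prop :=
  0 <= tau /\ (w <> 0 -> Rabs (w * tau) < 2 * PI).

Definition cong2pi (a b : R) : Prop := exists k : Z, a = b + 2 * PI * IZR k.

Definition reachable (v1 w1 v2 w2 v3 w3 : R) (p0 pf : pose) : Prop :=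
  exists t1 t2 t3 : R,
    admissible w1 t1 /\ admissible w2 t2 /\ admissible w3 t3 /\
    let '(x, y, th) := motion v3 w3 t3 (motion v2 w2 t2 (motion v1 w1 t1 p0)) in
    let '(xf, yf, thf) := pf in
    x = xf /\ y = yf /\ cong2pi th thf.

(* Let th1 be the heading after the first arc and L >= 0 the length of the straight
   segment.  Measured from (c, d), the final position is the vector (L, r31) rotated by
   th1, so its squared distance to (c, d) is L^2 + r31^2 >= r31^2.  Conversely, a point at
   squared distance at least r31^2 is such a rotation for L = sqrt(dist^2 - r31^2) and a
   suitable th1, and every heading is attained modulo 2 pi by a turn of admissible
   duration. *)

From Stdlib Require Import Reals Lra Lia ZArith.
Open Scope R_scope.

Lemma motion_turn (v w tau x y th : R) : w <> 0 ->
  motion v w tau (x, y, th) =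
  (x - v / w * (sin th - sin (th + w * tau)),
   y + v / w * (cos th - cos (th + w * tau)),
   th + w * tau).
Proof. intros Hw; unfold motion; destruct (Req_EM_T w 0); [contradiction | reflexivity]. Qed.

Lemma motion_straight (v tau x y th : R) :
  motion v 0 tau (x, y, th) = (x + v * tau * cos th, y + v * tau * sin th, th).
Proof. unfold motion; destruct (Req_EM_T 0 0); [reflexivity | contradiction]. Qed.

Lemma admissible_straight (tau : R) : 0 <= tau -> admissible 0 tau.
Proof. intros Htau; split; [exact Htau | intros []; reflexivity]. Qed.

Lemma cong2pi_sin_cos (a b : R) : cong2pi a b -> sin a = sin b /\ cos a = cos b.
Proof.
  intros [k ->]; destruct (Z_le_gt_dec 0 k) as [Hk | Hk].
  - rewrite <- (Z2Nat.id k Hk), <- INR_IZR_INZ.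
    replace (b + 2 * PI * INR (Z.to_nat k)) with (b + 2 * INR (Z.to_nat k) * PI) by ring.
    now rewrite sin_period, cos_period.
  - set (n := Z.to_nat (- k)).
    assert (Hn : INR n = - IZR k)
      by (unfold n; rewrite INR_IZR_INZ, Z2Nat.id, opp_IZR by lia; reflexivity).
    rewrite <- (sin_period (b + 2 * PI * IZR k) n), <- (cos_period (b + 2 * PI * IZR k) n).
    replace (b + 2 * PI * IZR k + 2 * INR n * PI) with b by (rewrite Hn; ring).
    split; reflexivity.
Qed.

Lemma rotated_sqr_norm (L r a : R) :
  (L * cos a - r * sin a) ^ 2 + (L * sin a + r * cos a) ^ 2 = L ^ 2 + r ^ 2.
Proof.
  transitivity ((L ^ 2 + r ^ 2) * ((sin a)² + (cos a)²)); [unfold Rsqr; ring |].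
  rewrite sin2_cos2; ring.
Qed.

Lemma unit_circle_angle (u v : R) : u ^ 2 + v ^ 2 = 1 -> exists t, cos t = u /\ sin t = v.
Proof.
  intros H.
  assert (Hu : -1 <= u <= 1) by nra.
  assert (Hs : sqrt (1 - u²) = Rabs v)
    by (replace (1 - u²) with v² by (unfold Rsqr; lra); apply sqrt_Rsqr_abs).
  destruct (Rle_dec 0 v) as [Hv | Hv].
  - exists (acos u); rewrite cos_acos, sin_acos, Hs by exact Hu.
    split; [reflexivity | apply Rabs_right; lra].
  - exists (- acos u); rewrite cos_neg, sin_neg, cos_acos, sin_acos, Hs by exact Hu.
    split; [reflexivity | rewrite Rabs_left; lra].
Qed.

(* The rotation taking (L, r) to (p, q) has cosine (pL + qr)/n and sine (qL - pr)/n,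
   where n = L^2 + r^2 = p^2 + q^2. *)
Lemma rotation_exists (p q L r : R) : p ^ 2 + q ^ 2 = L ^ 2 + r ^ 2 ->
  exists th, p = L * cos th - r * sin th /\ q = L * sin th + r * cos th.
Proof.
  intros H; destruct (Req_dec (L ^ 2 + r ^ 2) 0) as [Hz | Hz].
  - exists 0; assert (p = 0 /\ q = 0 /\ L = 0 /\ r = 0) as (-> & -> & -> & ->) by nra.
    split; ring.
  - set (n := L ^ 2 + r ^ 2) in *.
    destruct (unit_circle_angle ((p * L + q * r) / n) ((q * L - p * r) / n)) as [th [Hc Hs]].
    { replace (((p * L + q * r) / n) ^ 2 + ((q * L - p * r) / n) ^ 2)
        with ((p ^ 2 + q ^ 2) * n / (n * n)) by (unfold n; field; exact Hz).
      rewrite H; field; exact Hz. }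
    exists th; rewrite Hc, Hs; split; unfold n in *; field; exact Hz.
Qed.

Lemma reduce_angle_0_2PI (a : R) : exists k : Z, 0 <= a + 2 * PI * IZR k < 2 * PI.
Proof.
  pose proof PI_RGT_0 as HPI.
  destruct (archimed (a / (2 * PI))) as [H1 H2].
  exists (1 - up (a / (2 * PI)))%Z; rewrite minus_IZR.
  set (n := IZR (up (a / (2 * PI)))) in *.
  assert (Ha : a = a / (2 * PI) * (2 * PI)) by (field; lra).
  split; nra.
Qed.

Lemma turn_heading_reachable (w th a : R) : w <> 0 ->
  exists t, admissible w t /\ cong2pi (th + w * t) a.
Proof.
  intros Hw; pose proof PI_RGT_0 as HPI.
  destruct (Rlt_dec 0 w) as [Hpos | Hneg].
  - destruct (reduce_angle_0_2PI (a - th)) as [k Hk].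
    exists ((a - th + 2 * PI * IZR k) / w); unfold admissible, cong2pi.
    replace (w * ((a - th + 2 * PI * IZR k) / w)) with (a - th + 2 * PI * IZR k)
      by (field; exact Hw).
    split; [split |].
    + apply Rle_mult_inv_pos; lra.
    + intros _; rewrite Rabs_right; lra.
    + exists k; ring.
  - destruct (reduce_angle_0_2PI (th - a)) as [k Hk].
    exists ((th - a + 2 * PI * IZR k) / - w); unfold admissible, cong2pi.
    replace (w * ((th - a + 2 * PI * IZR k) / - w)) with (- (th - a + 2 * PI * IZR k))
      by (field; exact Hw).
    split; [split |].
    + apply Rle_mult_inv_pos; lra.
    + intros _; rewrite Rabs_left1; lra.
    + exists (- k)%Z; rewrite opp_IZR; ring.
Qed.

Section CSC.

Variables (x0 y0 th0 v1 w1 v2 v3 w3 : R).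
Hypotheses (Hw1 : w1 <> 0) (Hw3 : w3 <> 0).

Let r1 := v1 / w1.
Let r3 := v3 / w3.
Let cx (thf : R) := x0 - r1 * sin th0 + r3 * sin thf.
Let cy (thf : R) := y0 + r1 * cos th0 - r3 * cos thf.

Lemma csc_motion (t1 t2 t3 : R) :
  let th1 := th0 + w1 * t1 in
  let thf := th1 + w3 * t3 in
  motion v3 w3 t3 (motion v2 0 t2 (motion v1 w1 t1 (x0, y0, th0))) =
  (cx thf + (v2 * t2 * cos th1 - (r3 - r1) * sin th1),
   cy thf + (v2 * t2 * sin th1 + (r3 - r1) * cos th1),
   thf).
Proof.
  intros th1 thf.
  rewrite motion_turn, motion_straight, motion_turn by assumption.
  unfold cx, cy, r1, r3, thf, th1; f_equal; f_equal; ring.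
Qed.

Lemma csc_reachable_sqr_dist (xf yf thf : R) :
  reachable v1 w1 v2 0 v3 w3 (x0, y0, th0) (xf, yf, thf) ->
  (xf - cx thf) ^ 2 + (yf - cy thf) ^ 2 >= (r3 - r1) ^ 2.
Proof.
  intros (t1 & t2 & t3 & _ & _ & _ & Hend).
  rewrite csc_motion in Hend; cbv beta iota zeta in Hend.
  destruct Hend as (<- & <- & Hth); destruct (cong2pi_sin_cos _ _ Hth) as [Hs Hc].
  unfold cx, cy in *; rewrite Hs, Hc.
  replace (x0 - r1 * sin th0 + r3 * sin thf + _ - _) with
    (v2 * t2 * cos (th0 + w1 * t1) - (r3 - r1) * sin (th0 + w1 * t1)) by ring.
  replace (y0 + r1 * cos th0 - r3 * cos thf + _ - _) with
    (v2 * t2 * sin (th0 + w1 * t1) + (r3 - r1) * cos (th0 + w1 * t1)) by ring.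
  rewrite rotated_sqr_norm; pose proof (pow2_ge_0 (v2 * t2)); lra.
Qed.

Hypothesis Hv2 : 0 < v2.

Lemma csc_reachable_of_sqr_dist (xf yf thf : R) :
  (xf - cx thf) ^ 2 + (yf - cy thf) ^ 2 >= (r3 - r1) ^ 2 ->
  reachable v1 w1 v2 0 v3 w3 (x0, y0, th0) (xf, yf, thf).
Proof.
  intros Hdist.
  set (L := sqrt ((xf - cx thf) ^ 2 + (yf - cy thf) ^ 2 - (r3 - r1) ^ 2)).
  assert (HL : 0 <= L) by apply sqrt_pos.
  destruct (rotation_exists (xf - cx thf) (yf - cy thf) L (r3 - r1)) as [th1 [Hx Hy]].
  { unfold L; rewrite pow2_sqrt; lra. }
  destruct (turn_heading_reachable w1 th0 th1 Hw1) as [t1 [A1 H1]].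
  destruct (turn_heading_reachable w3 (th0 + w1 * t1) thf Hw3) as [t3 [A3 H3]].
  exists t1, (L / v2), t3; split; [exact A1 |]; split.
  { apply admissible_straight, Rle_mult_inv_pos; assumption. }
  split; [exact A3 |].
  rewrite csc_motion; cbv beta iota zeta.
  destruct (cong2pi_sin_cos _ _ H1) as [Hs1 Hc1]; destruct (cong2pi_sin_cos _ _ H3) as [Hs3 Hc3].
  replace (v2 * (L / v2)) with L by (field; lra).
  unfold cx, cy in *; rewrite Hs1, Hc1, Hs3, Hc3.
  split; [| split; [| exact H3]]; lra.
Qed.

End CSC.

Theorem theorem1 :
  forall (x0 y0 th0 v1 w1 v2 w2 v3 w3 xf yf thf : R),
    0 < v1 -> 0 < v2 -> 0 < v3 ->
    w1 <> 0 -> w2 = 0 -> w3 <> 0 ->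
    let r1 := v1 / w1 in
    let r3 := v3 / w3 in
    let c := x0 - r1 * sin th0 + r3 * sin thf in
    let d := y0 + r1 * cos th0 - r3 * cos thf in
    (reachable v1 w1 v2 w2 v3 w3 (x0, y0, th0) (xf, yf, thf) <->
     (xf - c) ^ 2 + (yf - d) ^ 2 >= (r3 - r1) ^ 2).
Proof.
  intros x0 y0 th0 v1 w1 v2 w2 v3 w3 xf yf thf _ Hv2 _ Hw1 -> Hw3.
  split.
  - exact (csc_reachable_sqr_dist x0 y0 th0 v1 w1 v2 v3 w3 Hw1 Hw3 xf yf thf).
  - exact (csc_reachable_of_sqr_dist x0 y0 th0 v1 w1 v2 v3 w3 Hw1 Hw3 Hv2 xf yf thf).
Qed.
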